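(* Let $R$ be a finite chain ring of length $2$ with residue field $\mathbb{F}_q$ and let $1\le n\le q^2+q$. Then $$\mathrm{m}_n(R)\le\left\lfloor\frac{(q+1)n-q}{q+2}\cdot(q^2+q+1)\right\rfloor.$$
   Context: Throughout, $R$ is a finite chain ring of nilpotency index (length) $2$, i.e. a finite local ring with radical $\mathrm{rad}R\neq 0$, $(\mathrm{rad}R)^2=0$, whose one-sided ideals form the chain $R\supsetneq\mathrm{rad}R\supsetneq 0$, with residue field $R/\mathrm{rad}R\cong\mathbb{F}_q$ ($q$ a prime power); then $|R|=q^2$. The projective Hjelmslev plane $\mathrm{PHG}(2,R)$ is the incidence structure whose points are the free rank-$1$ submodules of the right module $R_R^3$, whose lines are the free rank-$2$ submodules of $R_R^3$, with incidence given by inclusion; it has $q^4+q^3+q^2$ points and each line contains $q^2+q$ points. A $(k,n)$-arc is a map $\mathcal{K}$ from the point set to $\mathbb{N}_0$ with $\sum_x\mathcal{K}(x)=k$ and $\sum_{x\in L}\mathcal{K}(x)\le n$ for every line $L$; it is projective if $\mathcal{K}$ takes only values in $\{0,1\}$ (i.e. it is a set of $k$ points meeting every line in at most $n$ points). For $0\le n\le q^2+q$, $\mathrm{m}_n(R)$ denotes the largest $k$ such that a projective $(k,n)$-arc exists in $\mathrm{PHG}(2,R)$. *)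

From HB Require Import structures.
From mathcomp Require Import all_boot all_order all_algebra.
Set Implicit Arguments. Unset Strict Implicit. Unset Printing Implicit Defensive.
Import GRing.Theory.
Local Open Scope ring_scope.

Section ChainRing.
Variable R : finUnitRingType.

(* The set of non-units; for a local ring this is the radical crad R. *)
Definition crad : {set R} := [set x : R | x \isn't a GRing.unit].

(* R is local: the non-units form an additive subgroup (hence the unique
   maximal (two-sided) ideal = Jacobson radical). *)
Definition is_local : Prop :=
  forall x y : R, x \in crad -> y \in crad -> x + y \in crad.

Definition is_right_ideal (I : {set R}) : Prop :=
  0 \in I /\ (forall x y, x \in I -> y \in I -> x + y \in I) /\
  (forall x r, x \in I -> x * r \in I).

Definition is_left_ideal (I : {set R}) : Prop :=
  0 \in I /\ (forall x y, x \in I -> y \in I -> x + y \in I) /\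
  (forall x r, x \in I -> r * x \in I).

Definition chain_ring2 : Prop :=
  [/\ is_local,
      crad != [set 0],
      (forall x y, x \in crad -> y \in crad -> x * y = 0),
      (forall I, is_right_ideal I -> I = setT \/ I = crad \/ I = [set 0]) &
      (forall I, is_left_ideal I -> I = setT \/ I = crad \/ I = [set 0])].

(* The right module R_R^3, vectors as row vectors. *)
Definition rscale (v : 'rV[R]_3) (r : R) : 'rV[R]_3 := \row_i (v 0 i * r).

Definition comb k (b : {ffun 'I_k -> 'rV[R]_3}) (c : 'rV[R]_k) : 'rV[R]_3 :=
  \sum_(i < k) rscale (b i) (c 0 i).

Definition is_submodule (M : {set 'rV[R]_3}) : bool :=
  [&& 0 \in M, [forall x in M, forall y in M, x + y \in M] &
      [forall x in M, forall r : R, rscale x r \in M]].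

Definition free_rank k (M : {set 'rV[R]_3}) : bool :=
  is_submodule M &&
  [exists b : {ffun 'I_k -> 'rV[R]_3},
     injectiveb (comb b) && (M == [set comb b c | c : 'rV[R]_k])].

(* Points and lines of PHG(2,R); incidence is inclusion. *)
Definition is_point (M : {set 'rV[R]_3}) : bool := free_rank 1 M.
Definition is_line (M : {set 'rV[R]_3}) : bool := free_rank 2 M.

Definition proj_arc (S : {set {set 'rV[R]_3}}) (n : nat) : bool :=
  [forall x in S, is_point x] &&
  [forall L : {set 'rV[R]_3}, is_line L ==>
     (#|[set x in S | x \subset L]| <= n)%N].

Definition m_n (n : nat) : nat :=
  \max_(S : {set {set 'rV[R]_3}} | proj_arc S n) #|S|.

End ChainRing.

From mathcomp Require Import all_boot all_order all_algebra zify.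
Set Implicit Arguments. Unset Strict Implicit. Unset Printing Implicit Defensive.
Import GRing.Theory.

(* Write q = |rad R|, so |R| = q^2.  Let S be a projective (k,n)-arc and M the
   largest number of points of S in one neighbour class, attained at x in S.
   There are at most q^2+q lines through x, each carrying at most n-1 further
   points of S; every other point of S lies on at least one of them, and every
   neighbour of x on at least q of them.  Counting incidences gives
   (k-1) + (q-1)(M-1) <= (q^2+q)(n-1).  As the at most q^2+q+1 neighbour
   classes cover S, k <= (q^2+q+1) M, and eliminating M gives the bound. *)

Local Open Scope ring_scope.

Section ChainRing.
Variable R : finUnitRingType.
Hypothesis chainR : chain_ring2 R.
Local Notation J := (crad R).

Lemma cradE (x : R) : (x \in J) = (x \isn't a GRing.unit).
Proof. by rewrite inE. Qed.

Lemma crad0 : (0 : R) \in J. Proof. by rewrite cradE unitr0. Qed.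

Lemma crad1 : (1 : R) \notin J. Proof. by rewrite cradE unitr1. Qed.

Lemma crad_unit (x : R) : x \notin J -> x \is a GRing.unit.
Proof. by rewrite cradE negbK. Qed.

Lemma cradN (x : R) : (- x \in J) = (x \in J).
Proof. by rewrite !cradE unitrN. Qed.

Lemma cradD (x y : R) : x \in J -> y \in J -> x + y \in J.
Proof. by case: chainR => localR _ _ _ _; apply: localR. Qed.

Lemma cradB (x y : R) : x \in J -> y \in J -> x - y \in J.
Proof. by move=> xJ yJ; rewrite cradD ?cradN. Qed.

Lemma crad_mul0 (x y : R) : x \in J -> y \in J -> x * y = 0.
Proof. by case: chainR => _ _ sqJ _ _; apply: sqJ. Qed.

Lemma cradMl (x y : R) : y \in J -> x * y \in J.
Proof.
move=> yJ; have [xu | xJ] := boolP (x \is a GRing.unit).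
  by rewrite cradE unitrMr // -cradE.
by rewrite (crad_mul0 _ yJ) ?crad0 // cradE.
Qed.

Lemma cradMr (x y : R) : x \in J -> x * y \in J.
Proof.
move=> xJ; have [yu | yJ] := boolP (y \is a GRing.unit).
  by rewrite cradE unitrMl // -cradE.
by rewrite (crad_mul0 xJ) ?crad0 // cradE.
Qed.

Lemma crad_neq0 : exists2 t : R, t \in J & t != 0.
Proof.
case: chainR => _ J_neq0 _ _ _.
have /subsetPn[t tJ] : ~~ (J \subset [set 0]).
  by apply: contra J_neq0 => sJ0; rewrite eqEsubset sJ0 sub1set crad0.
by rewrite inE => t_neq0; exists t.
Qed.

Lemma card_crad_gt1 : (1 < #|J|)%N.
Proof.
have [t tJ t_neq0] := crad_neq0.
by apply/card_gt1P; exists t, 0; rewrite tJ crad0 t_neq0.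
Qed.

Lemma crad_annl (t x : R) : t != 0 -> x * t = 0 -> x \in J.
Proof.
move=> t_neq0 xt0; apply: contraNT t_neq0 => /crad_unit xu.
by rewrite -(mulrI_eq0 _ (mulrI xu)) xt0.
Qed.

Lemma crad_annr (t x : R) : t != 0 -> t * x = 0 -> x \in J.
Proof.
move=> t_neq0 tx0; apply: contraNT t_neq0 => /crad_unit xu.
by rewrite -(mulIr_eq0 _ (mulIr xu)) tx0.
Qed.

(* Any nonzero element of the radical generates it, on either side, because
   the one-sided ideals of R form a chain. *)
Lemma crad_lgen (t j : R) : t \in J -> t != 0 -> j \in J -> exists a, j = a * t.
Proof.
move=> tJ t_neq0; pose I := [set a * t | a : R].
have idealI : is_left_ideal I.
  split; first by apply/imsetP; exists 0; rewrite ?mul0r.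
  split=> [x y /imsetP[a _ ->] /imsetP[b _ ->] | x r /imsetP[a _ ->]].
    by apply/imsetP; exists (a + b); rewrite ?mulrDl.
  by apply/imsetP; exists (r * a); rewrite ?mulrA.
case: chainR => _ _ _ _ /(_ I idealI) [IT | [IJ | I0]].
- have /imsetP[a _ a_t] : (1 : R) \in I by rewrite IT inE.
  by have := crad1; rewrite a_t cradMl.
- by rewrite -IJ => /imsetP[a _ ->]; exists a.
- have : t \in I by apply/imsetP; exists 1; rewrite ?mul1r.
  by rewrite I0 inE (negbTE t_neq0).
Qed.

Lemma crad_rgen (t j : R) : t \in J -> t != 0 -> j \in J -> exists a, j = t * a.
Proof.
move=> tJ t_neq0; pose I := [set t * a | a : R].
have idealI : is_right_ideal I.
  split; first by apply/imsetP; exists 0; rewrite ?mulr0.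
  split=> [x y /imsetP[a _ ->] /imsetP[b _ ->] | x r /imsetP[a _ ->]].
    by apply/imsetP; exists (a + b); rewrite ?mulrDr.
  by apply/imsetP; exists (a * r); rewrite ?mulrA.
case: chainR => _ _ _ /(_ I idealI) [IT | [IJ | I0]] _.
- have /imsetP[a _ t_a] : (1 : R) \in I by rewrite IT inE.
  by have := crad1; rewrite t_a cradMr.
- by rewrite -IJ => /imsetP[a _ ->]; exists a.
- have : t \in I by apply/imsetP; exists 1; rewrite ?mulr1.
  by rewrite I0 inE (negbTE t_neq0).
Qed.

(* For 0 != t in J, the map r |-> t r sends R onto J with fibres the cosets of J. *)
Lemma card_crad_sq : (#|J| * #|J| = #|R|)%N.
Proof.
have [t tJ t_neq0] := crad_neq0.
have card_fibre y : y \in J -> #|[set r | t * r == y]| = #|J|.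
  move=> /(crad_rgen tJ t_neq0)[r0 ->].
  have -> : [set r | t * r == t * r0] = [set r0 + s | s in J].
    apply/setP => r; rewrite inE; apply/eqP/imsetP => [tr | [s sJ ->]].
      exists (r - r0); last by rewrite addrC subrK.
      by apply: (crad_annr t_neq0); rewrite mulrBr tr subrr.
    by rewrite mulrDr (crad_mul0 tJ sJ) addr0.
  by rewrite card_imset //; apply: addrI.
rewrite -[RHS]sum1_card (partition_big (fun r => t * r) (mem J)) /=; last first.
  by move=> r _; apply: cradMr.
rewrite -sum_nat_const; apply: eq_bigr => y yJ.
by rewrite -(card_fibre y yJ) -sum1_card; apply: eq_bigl => r; rewrite inE.
Qed.

End ChainRing.

Lemma card_disjoint_family (T : finType) (F : {set {set T}}) (U : {set T}) (a : nat) :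
  (forall A, A \in F -> A \subset U) ->
  (forall A B, A \in F -> B \in F -> A != B -> [disjoint A & B]) ->
  (forall A, A \in F -> a <= #|A|)%N ->
  (#|F| * a <= #|U|)%N.
Proof.
move=> subU disjF bigF.
have trivF : trivIset F by apply/trivIsetP.
rewrite -sum_nat_const; apply: (@leq_trans (\sum_(A in F) #|A|)); first exact: leq_sum.
by rewrite (eqnP trivF) subset_leq_card //; apply/bigcupsP.
Qed.

Lemma card_sep_sum (T : finType) (A : {set T}) (P : pred T) :
  #|[set y in A | P y]| = (\sum_(y in A) P y)%N.
Proof.
rewrite -sum1_card big_mkcond [RHS]big_mkcond /=; apply: eq_bigr => y _.
by rewrite !inE; case: (y \in A); case: (P y).
Qed.

Lemma exists_third (i k : 'I_3) : exists l : 'I_3, (l != i) && (l != k).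
Proof.
have /subsetPn[l _] : ~~ ([set: 'I_3] \subset [set i; k]).
  by apply/negP => /subset_leq_card; rewrite cardsT card_ord cards2; case: (i != k).
by rewrite !inE negb_or => lik; exists l.
Qed.

Section Vectors.
Variable R : finUnitRingType.
Local Notation V := 'rV[R]_3.

Definition box (A : 'I_3 -> {set R}) : {set V} := [set v : V | [forall i, v 0 i \in A i]].

Lemma card_box (A : 'I_3 -> {set R}) : #|box A| = (\prod_(i < 3) #|A i|)%N.
Proof.
pose f (g : {ffun 'I_3 -> R}) : V := \row_i g i.
have f_inj : injective f.
  by move=> g h /rowP gh; apply/ffunP => i; have := gh i; rewrite !mxE.
have -> : box A = f @: [set g | g \in family (fun i => mem (A i))].
  apply/setP => v; rewrite inE; apply/forallP/imsetP => [vA | [g]].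
    exists [ffun i => v 0 i]; last by apply/rowP => i; rewrite !mxE ffunE.
    by rewrite inE; apply/familyP => i; rewrite ffunE; apply: vA.
  by rewrite inE => /familyP gA -> i; rewrite mxE; apply: gA.
by rewrite card_imset // cardsE card_family foldrE big_map big_enum.
Qed.

Lemma card_box_at (i : 'I_3) (a b : {set R}) :
  #|box (fun j => if j == i then a else b)| = (#|a| * #|b| ^ 2)%N.
Proof.
rewrite card_box (bigD1 i) //= eqxx (eq_bigr (fun _ => #|b|)) => [|j /negbTE -> //].
by rewrite prod_nat_const cardC1 card_ord.
Qed.

Lemma rscale1 (v : V) : rscale v 1 = v.
Proof. by apply/rowP => i; rewrite mxE mulr1. Qed.

Lemma rscaler0 (v : V) : rscale v 0 = 0.
Proof. by apply/rowP => i; rewrite !mxE mulr0. Qed.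

Lemma rscaleA (v : V) r s : rscale (rscale v r) s = rscale v (r * s).
Proof. by apply/rowP => i; rewrite !mxE mulrA. Qed.

Lemma rscaleDr (v : V) r s : rscale v (r + s) = rscale v r + rscale v s.
Proof. by apply/rowP => i; rewrite !mxE mulrDr. Qed.

Lemma rscaleDl (v w : V) r : rscale (v + w) r = rscale v r + rscale w r.
Proof. by apply/rowP => i; rewrite !mxE mulrDl. Qed.

Lemma rscaleNr (v : V) r : rscale v (- r) = - rscale v r.
Proof. by apply/rowP => i; rewrite !mxE mulrN. Qed.

Lemma rscaleNl (v : V) r : rscale (- v) r = - rscale v r.
Proof. by apply/rowP => i; rewrite !mxE mulNr. Qed.

Lemma rscaleBr (v : V) r s : rscale v (r - s) = rscale v r - rscale v s.
Proof. by rewrite rscaleDr rscaleNr. Qed.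

Lemma rscaleBl (v w : V) r : rscale (v - w) r = rscale v r - rscale w r.
Proof. by rewrite rscaleDl rscaleNl. Qed.

Definition submodule_axioms (L : {set V}) : Prop :=
  [/\ (0 : V) \in L, (forall x y, x \in L -> y \in L -> x + y \in L) &
      (forall x r, x \in L -> rscale x r \in L)].

Lemma is_submoduleP (L : {set V}) : reflect (submodule_axioms L) (is_submodule L).
Proof.
apply: (iffP and3P) => [[L0 /forallP addL /forallP scaleL] | [L0 addL scaleL]].
  split=> // [x y xL yL | x r xL].
    by have /implyP/(_ xL)/forallP/(_ y)/implyP := addL x; apply.
  by have /implyP/(_ xL)/forallP := scaleL x; apply.
split=> //; apply/forallP => x; apply/implyP => xL; apply/forallP.
  by move=> y; apply/implyP; apply: addL.
by move=> r; apply: scaleL.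
Qed.

Lemma submoduleB (L : {set V}) x y :
  submodule_axioms L -> x \in L -> y \in L -> x - y \in L.
Proof.
case=> _ addL scaleL xL yL; rewrite addL // -[y]rscale1 -rscaleNr; exact: scaleL.
Qed.

Definition span1 (v : V) : {set V} := [set rscale v r | r : R].

Lemma mem_span1 (v : V) : v \in span1 v.
Proof. by apply/imsetP; exists 1; rewrite ?rscale1. Qed.

Lemma span1_subset (L : {set V}) (v : V) :
  submodule_axioms L -> (span1 v \subset L) = (v \in L).
Proof.
case=> _ _ scaleL; apply/subsetP/idP => [-> // | vL z /imsetP[r _ ->]].
  exact: mem_span1.
exact: scaleL.
Qed.

Definition coef_along (v : V) (i : 'I_3) (z : V) : R := (v 0 i)^-1 * z 0 i.

Lemma sub_coef_along (v z : V) (i : 'I_3) :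
  v 0 i \is a GRing.unit -> (z - rscale v (coef_along v i z)) 0 i = 0.
Proof. by move=> vi; rewrite !mxE /coef_along mulVKr // subrr. Qed.

Definition basis2 (v w : V) : {ffun 'I_2 -> V} :=
  [ffun j : 'I_2 => if j == ord0 then v else w].

Definition coef2 (r s : R) : 'rV[R]_2 := \row_(j < 2) if j == ord0 then r else s.

Lemma coef2E (c : 'rV[R]_2) : c = coef2 (c 0 ord0) (c 0 ord_max).
Proof.
by apply/rowP => -[[|[|//]] ?]; rewrite mxE /=; congr (c 0 _); apply: val_inj.
Qed.

Lemma comb2E (b : {ffun 'I_2 -> V}) (c : 'rV[R]_2) :
  comb b c = rscale (b ord0) (c 0 ord0) + rscale (b ord_max) (c 0 ord_max).
Proof.
rewrite /comb big_ord_recr big_ord1 /=.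
by have -> : widen_ord (leqnSn 1) ord0 = ord0 :> 'I_2 by apply: val_inj.
Qed.

Lemma comb_basis2 (v w : V) r s :
  comb (basis2 v w) (coef2 r s) = rscale v r + rscale w s.
Proof. by rewrite comb2E !ffunE !mxE. Qed.

Definition span2 (v w : V) : {set V} := [set comb (basis2 v w) c | c : 'rV[R]_2].

Lemma span2P (v w z : V) :
  reflect (exists r s, z = rscale v r + rscale w s) (z \in span2 v w).
Proof.
apply: (iffP imsetP) => [[c _ ->] | [r [s ->]]]; last first.
  by exists (coef2 r s); rewrite ?comb_basis2.
by exists (c 0 ord0), (c 0 ord_max); rewrite [in LHS](coef2E c) comb_basis2.
Qed.

Lemma mem_span2l (v w : V) : v \in span2 v w.
Proof. by apply/span2P; exists 1, 0; rewrite rscale1 rscaler0 addr0. Qed.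

Lemma mem_span2r (v w : V) : w \in span2 v w.
Proof. by apply/span2P; exists 0, 1; rewrite rscale1 rscaler0 add0r. Qed.

Lemma span2_submodule (v w : V) : submodule_axioms (span2 v w).
Proof.
split.
- by apply/span2P; exists 0, 0; rewrite !rscaler0 addr0.
- move=> _ _ /span2P[r [s ->]] /span2P[r' [s' ->]].
  by apply/span2P; exists (r + r'), (s + s'); rewrite !rscaleDr addrACA.
- move=> _ t /span2P[r [s ->]].
  by apply/span2P; exists (r * t), (s * t); rewrite rscaleDl !rscaleA.
Qed.

Lemma span2_subset (L : {set V}) (v w : V) :
  submodule_axioms L -> v \in L -> w \in L -> span2 v w \subset L.
Proof.
case=> _ addL scaleL vL wL; apply/subsetP => _ /span2P[r [s ->]].
by apply: addL; apply: scaleL.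
Qed.

Lemma is_line_span2 (v w : V) :
  (forall r s, rscale v r + rscale w s = 0 -> r = 0 /\ s = 0) -> is_line (span2 v w).
Proof.
move=> indep; apply/andP; split; first exact/is_submoduleP/span2_submodule.
apply/existsP; exists (basis2 v w); rewrite eqxx andbT.
apply/injectiveP => c c'; rewrite (coef2E c) (coef2E c') !comb_basis2 => cc'.
have /indep[] : rscale v (c 0 ord0 - c' 0 ord0) +
                rscale w (c 0 ord_max - c' 0 ord_max) = 0.
  by rewrite !rscaleBr addrACA cc' -opprD subrr.
by move=> /subr0_eq -> /subr0_eq ->.
Qed.

End Vectors.

Section ChainVectors.
Variable R : finUnitRingType.
Hypothesis chainR : chain_ring2 R.
Local Notation J := (crad R).
Local Notation V := 'rV[R]_3.

(* Vectors with all coordinates in rad R; the free vectors (those spanning a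
   point) are the unimodular ones, i.e. those outside [radv]. *)
Definition radv : {set V} := box (fun _ => J).

Lemma radvP (v : V) : reflect (forall i, v 0 i \in J) (v \in radv).
Proof. by rewrite inE; apply: forallP. Qed.

Lemma radvPn (v : V) : reflect (exists i, v 0 i \is a GRing.unit) (v \notin radv).
Proof.
apply: (iffP idP) => [| [i vi] ]; last by apply/negP => /radvP/(_ i); rewrite cradE vi.
move=> vu; apply/existsP; apply: contraR vu; rewrite negb_exists => /forallP vJ.
by apply/radvP => i; rewrite cradE vJ.
Qed.

Lemma radv0 : (0 : V) \in radv.
Proof. by apply/radvP => i; rewrite mxE crad0. Qed.

Lemma radvD (v w : V) : v \in radv -> w \in radv -> v + w \in radv.
Proof. by move=> /radvP vJ /radvP wJ; apply/radvP => i; rewrite mxE cradD. Qed.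

Lemma radvB (v w : V) : v \in radv -> w \in radv -> v - w \in radv.
Proof. by move=> /radvP vJ /radvP wJ; apply/radvP => i; rewrite !mxE cradB. Qed.

Lemma radv_rscale (v : V) r : v \in radv -> rscale v r \in radv.
Proof. by move=> /radvP vJ; apply/radvP => i; rewrite mxE cradMr. Qed.

Lemma rscale_crad (v : V) r : r \in J -> rscale v r \in radv.
Proof. by move=> rJ; apply/radvP => i; rewrite mxE cradMl. Qed.

Lemma rscale_radv_crad (v : V) t : v \in radv -> t \in J -> rscale v t = 0.
Proof.
by move=> /radvP vJ tJ; apply/rowP => i; rewrite !mxE (crad_mul0 chainR).
Qed.

Lemma unimod_rscale_inj (v : V) : v \notin radv -> injective (rscale v).
Proof.
case/radvPn => i vi r s /rowP/(_ i); rewrite !mxE; exact: mulrI.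
Qed.

Lemma unimod_rscale_radv (v : V) r : v \notin radv -> (rscale v r \in radv) = (r \in J).
Proof.
case/radvPn => i vi; apply/idP/idP; last exact: rscale_crad.
by move/radvP/(_ i); rewrite mxE !cradE unitrMr.
Qed.

Lemma card_span1 (v : V) : v \notin radv -> #|span1 v| = #|R|.
Proof. by move=> vu; rewrite card_imset //; apply: unimod_rscale_inj. Qed.

Lemma span1_eq (u v : V) c : u \notin radv -> v \notin radv ->
  u = rscale v c -> span1 u = span1 v.
Proof.
move=> uu vu uvc; apply/eqP; rewrite eqEcard !card_span1 // leqnn andbT uvc.
by apply/subsetP => _ /imsetP[r _ ->]; rewrite rscaleA; apply/imsetP; exists (c * r).
Qed.

Lemma is_pointP (P : {set V}) : is_point P -> exists2 v, v \notin radv & P = span1 v.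
Proof.
case/andP => _ /existsP[b /andP[/injectiveP b_inj /eqP ->]].
have comb1E c : comb b c = rscale (b ord0) (c 0 ord0) by rewrite /comb big_ord1.
exists (b ord0).
  apply/negP => bJ; have [t tJ t_neq0] := crad_neq0 chainR.
  have /b_inj/matrixP/(_ 0 0) : comb b (const_mx t) = comb b 0.
    by rewrite !comb1E !mxE rscaler0 rscale_radv_crad.
  by rewrite !mxE; apply/eqP.
apply/setP => z; apply/imsetP/imsetP => [[c _ ->] | [r _ ->]].
  by exists (c 0 ord0); rewrite ?comb1E.
by exists (const_mx r); rewrite ?comb1E ?mxE.
Qed.

Lemma span2_indep (v w : V) (i : 'I_3) :
  v 0 i \is a GRing.unit -> w 0 i = 0 -> w \notin radv ->
  forall r s, rscale v r + rscale w s = 0 -> r = 0 /\ s = 0.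
Proof.
move=> vi wi wu r s vw0.
have r0 : r = 0.
  apply/eqP; rewrite -(mulrI_eq0 _ (mulrI vi)).
  by move/rowP: vw0 => /(_ i); rewrite !mxE wi mul0r addr0 => ->.
split=> //; apply: (unimod_rscale_inj wu).
by move: vw0; rewrite r0 rscaler0 add0r rscaler0.
Qed.

End ChainVectors.

Section Lines.
Variable R : finUnitRingType.
Hypothesis chainR : chain_ring2 R.
Local Notation J := (crad R).
Local Notation V := 'rV[R]_3.
Local Notation radv := (radv R).

Lemma is_lineP (L : {set V}) : is_line L ->
  submodule_axioms L /\
  exists2 b : {ffun 'I_2 -> V}, injective (comb b) & L = [set comb b c | c : 'rV_2].
Proof.
case/andP => subL /existsP[b /andP[/injectiveP b_inj /eqP Lb]].
by split; [exact/is_submoduleP | exists b].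
Qed.

Lemma card_line (L : {set V}) : is_line L -> #|L| = (#|R| ^ 2)%N.
Proof. by case/is_lineP => _ [b b_inj ->]; rewrite card_imset // card_mx. Qed.

(* If comb b c lies in radv, then comb b (c t) = 0 for 0 != t in J, so by
   freeness both coordinates of c annihilate t and lie in J. *)
Lemma card_line_radv (L : {set V}) : is_line L -> (#|L :&: radv| <= #|J| ^ 2)%N.
Proof.
case/is_lineP => _ [b b_inj ->].
have [t tJ t_neq0] := crad_neq0 chainR.
pose f (p : R * R) := comb b (coef2 p.1 p.2).
apply: (@leq_trans #|f @: setX J J|); last first.
  by rewrite (leq_trans (leq_imset_card _ _)) // cardsX.
apply/subset_leq_card/subsetP => _ /setIP[/imsetP[c _ ->] cJ].
apply/imsetP; exists (c 0 ord0, c 0 ord_max); last by rewrite /f -coef2E.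
have /b_inj/rowP ct0 : comb b (coef2 (c 0 ord0 * t) (c 0 ord_max * t)) = comb b 0.
  rewrite !comb2E !mxE /= !rscaler0 addr0 -!rscaleA -rscaleDl -comb2E.
  exact: rscale_radv_crad.
have := ct0 ord0; have := ct0 ord_max; rewrite !mxE /= => ct1 ct2.
by rewrite inE /= (crad_annl t_neq0 ct1) (crad_annl t_neq0 ct2).
Qed.

Definition slice (i : 'I_3) (L : {set V}) : {set V} := [set z in L | z 0 i == 0].

Section LineThrough.
Variables (L : {set V}) (v : V) (i : 'I_3).
Hypotheses (lineL : is_line L) (vi : v 0 i \is a GRing.unit) (vL : v \in L).

Lemma sub_coef_along_slice (z : V) : z \in L -> z - rscale v (coef_along v i z) \in slice i L.
Proof.
have [subL _] := is_lineP lineL; have [_ _ scaleL] := subL.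
by move=> zL; rewrite inE submoduleB ?scaleL //= sub_coef_along.
Qed.

(* L is the direct sum of v R and its slice, so |L| = |R| |slice i L|. *)
Lemma card_slice : #|slice i L| = #|R|.
Proof.
have [[_ addL scaleL] _] := is_lineP lineL.
pose psi (p : R * V) := rscale v p.1 + p.2.
have psi_inj : {in setX setT (slice i L) &, injective psi}.
  move=> [a h] [a' h']; rewrite !inE /= => /andP[_ /eqP hi] /andP[_ /eqP hi'] e.
  have aa' : a = a'.
    by apply: (mulrI vi); have /rowP/(_ i) := e; rewrite !mxE hi hi' !addr0.
  by move: e; rewrite /psi /= aa' => /addrI ->.
have psiL : psi @: setX setT (slice i L) = L.
  apply/setP => z; apply/imsetP/idP => [[[a h]] | zL].
    by rewrite !inE /= => /andP[hL _] ->; rewrite addL ?scaleL.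
  exists (coef_along v i z, z - rscale v (coef_along v i z)); last by rewrite /psi /= addrC subrK.
  by rewrite in_setX in_setT sub_coef_along_slice.
have R_gt0 : (0 < #|R|)%N by apply/card_gt0P; exists 0.
apply/eqP; rewrite -(eqn_pmul2l R_gt0).
by rewrite -cardsT -cardsX -(card_in_imset psi_inj) psiL cardsT (card_line lineL) mulnn.
Qed.

(* Otherwise the slice, of size |R| = |J|^2, would fill L :&: radv, which
   however contains v t for 0 != t in J, off the slice. *)
Lemma slice_unimod : exists2 w, w \in slice i L & w \notin radv.
Proof.
have [[_ _ scaleL] _] := is_lineP lineL.
have [t tJ t_neq0] := crad_neq0 chainR.
apply/exists_inP; apply: contraT; rewrite negb_exists_in => /forall_inP sliceJ.
have sub_slice : slice i L \subset L :&: radv.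
  by apply/subsetP => z zS; rewrite inE -[z \in radv]negbK sliceJ // andbT; case/setIdP: zS.
have eq_slice : slice i L = L :&: radv.
  apply/eqP; rewrite eqEcard sub_slice card_slice -(card_crad_sq chainR) mulnn.
  exact: card_line_radv.
have : rscale v t \in L :&: radv by rewrite inE scaleL //= rscale_crad.
rewrite -eq_slice inE mxE => /andP[_ /eqP vit0].
by move: t_neq0; rewrite -(mulrI_eq0 _ (mulrI vi)) vit0 eqxx.
Qed.

Lemma line_through_unimod :
  exists w : V, [/\ w 0 i = 0, w \notin radv, L = span2 v w & slice i L = span1 w].
Proof.
have [subL _] := is_lineP lineL; have [_ _ scaleL] := subL.
have [w wS wu] := slice_unimod; have /setIdP[wL /eqP wi] := wS.
have slice_w : slice i L = span1 w.
  apply/esym/eqP; rewrite eqEcard card_slice card_span1 // leqnn andbT.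
  by apply/subsetP => _ /imsetP[r _ ->]; rewrite inE scaleL //= mxE wi mul0r.
exists w; split=> //; apply/eqP; rewrite eqEsubset span2_subset //= andbT.
apply/subsetP => z zL; have := sub_coef_along_slice zL; rewrite slice_w.
case/imsetP=> s _ zs; apply/span2P; exists (coef_along v i z), s.
by rewrite -zs addrC subrK.
Qed.

End LineThrough.

Definition lines_through (v : V) : {set {set V}} := [set L | is_line L && (v \in L)].

End Lines.

Section LinesThroughPoint.
Variable R : finUnitRingType.
Hypothesis chainR : chain_ring2 R.
Local Notation J := (crad R).
Local Notation V := 'rV[R]_3.
Local Notation radv := (radv R).
Variables (v : V) (i : 'I_3).
Hypothesis vi : v 0 i \is a GRing.unit.

Lemma lines_through_slice_subset (L L' : {set V}) (z : V) :
  L \in lines_through v -> L' \in lines_through v ->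
  z \in slice i L :\: radv -> z \in L' -> L \subset L'.
Proof.
rewrite inE => /andP[lineL vL]; rewrite inE => /andP[lineL' vL'] /setDP[zS zu] zL'.
have [w [wi wu Lvw slice_w]] := line_through_unimod chainR lineL vi vL.
have [subL' _] := is_lineP lineL'; have [_ _ scaleL'] := subL'.
move: zS; rewrite slice_w => /imsetP[s _ zws].
have su : s \is a GRing.unit.
  by apply: crad_unit; rewrite -(unimod_rscale_radv chainR _ wu) -zws.
have wL' : w \in L'.
  have -> : w = rscale z s^-1 by rewrite zws rscaleA mulrV ?rscale1.
  exact: scaleL'.
by rewrite Lvw; apply: span2_subset.
Qed.

Lemma lines_through_slice_disjoint (L L' : {set V}) :
  L \in lines_through v -> L' \in lines_through v -> L != L' ->
  [disjoint slice i L :\: radv & slice i L' :\: radv].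
Proof.
move=> Lv L'v; apply: contraR => /pred0Pn[z /andP[zS zS']].
have zL : z \in L by case/setDP: zS => /setIdP[].
have zL' : z \in L' by case/setDP: zS' => /setIdP[].
by rewrite eqEsubset (lines_through_slice_subset Lv L'v zS zL') (lines_through_slice_subset L'v Lv zS' zL).
Qed.

Lemma card_slice_unimod (L : {set V}) :
  L \in lines_through v -> (#|R| - #|J| <= #|slice i L :\: radv|)%N.
Proof.
rewrite inE => /andP[lineL vL].
have [w [wi wu Lvw slice_w]] := line_through_unimod chainR lineL vi vL.
have -> : (#|R| - #|J| = #|[set rscale w u | u in ~: J]|)%N.
  rewrite card_imset; last exact: unimod_rscale_inj.
  by rewrite -(cardsC J) addKn.
apply/subset_leq_card/subsetP => z /imsetP[u]; rewrite inE => uJ ->.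
rewrite in_setD slice_w (unimod_rscale_radv chainR _ wu) uJ /=.
by apply/imsetP; exists u.
Qed.

Lemma card_hyperplane_unimod :
  #|[set z : V | z 0 i == 0] :\: radv| = (#|R| ^ 2 - #|J| ^ 2)%N.
Proof.
have -> : [set z : V | z 0 i == 0] = box (fun j => if j == i then [set 0] else setT).
  apply/setP => z; rewrite !inE; apply/eqP/forallP => [zi j | /(_ i)].
    by case: eqP => [-> | _]; rewrite inE ?zi.
  by rewrite eqxx inE => /eqP.
rewrite cardsD card_box_at cards1 cardsT mul1n; congr (_ - _)%N.
have -> : box (fun j => if j == i then [set 0] else setT) :&: radv =
          box (fun j => if j == i then [set 0] else J).
  apply/setP => z; rewrite !inE.
  apply/andP/forallP => [[/forallP z0 /forallP zJ] j | zP].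
    by move: (z0 j) (zJ j); case: (j == i).
  split; apply/forallP => j; move: (zP j); case: (j == i); rewrite !inE //.
  by move/eqP ->; rewrite unitr0.
by rewrite card_box_at cards1 mul1n.
Qed.

(* The lines through v meet the unimodular part of the hyperplane z_i = 0 in
   pairwise disjoint sets of at least |R| - |J| elements each. *)
Lemma card_lines_through : (#|lines_through v| <= #|R| + #|J|)%N.
Proof.
have J_lt_R : (#|J| < #|R|)%N.
  by have := card_crad_sq chainR; have := card_crad_gt1 chainR; nia.
pose slices := (fun L => slice i L :\: radv) @: lines_through v.
have card_slices : #|slices| = #|lines_through v|.
  apply: card_in_imset => L L' Lv L'v eqLL'; apply/eqP; apply: contraT => neqLL'.
  have [z zS] : exists z, z \in slice i L' :\: radv.
    by apply/card_gt0P; apply: leq_trans (card_slice_unimod L'v); rewrite subn_gt0.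
  have := disjointFl (lines_through_slice_disjoint Lv L'v neqLL') zS.
  by rewrite eqLL' zS.
rewrite -(@leq_pmul2r (#|R| - #|J|)); last by rewrite subn_gt0.
rewrite -card_slices [X in (_ <= X)%N]mulnC -subn_sqr -card_hyperplane_unimod.
apply: card_disjoint_family.
- move=> _ /imsetP[L _ ->]; apply: setSD; apply/subsetP => z.
  by rewrite !inE => /andP[].
- move=> _ _ /imsetP[L Lv ->] /imsetP[L' L'v ->] neq.
  by apply: lines_through_slice_disjoint => //; apply: contraNneq neq => ->.
- by move=> _ /imsetP[L Lv ->]; apply: card_slice_unimod.
Qed.

End LinesThroughPoint.

Section NeighbourClasses.
Variable R : finUnitRingType.
Hypothesis chainR : chain_ring2 R.
Local Notation J := (crad R).
Local Notation V := 'rV[R]_3.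
Local Notation radv := (radv R).

(* The neighbour class of a point, as the set of free vectors congruent modulo
   rad R to some vector of the point; two points are neighbours iff their
   classes coincide. *)
Definition nclass (P : {set V}) : {set V} :=
  [set w : V | (w \notin radv) && [exists p in P, w - p \in radv]].

Lemma nclass_span1E (v w : V) :
  (w \in nclass (span1 v)) = (w \notin radv) && [exists r, w - rscale v r \in radv].
Proof.
rewrite inE; congr (_ && _); apply/exists_inP/existsP => [[_ /imsetP[r _ ->]] | [r]].
  by exists r.
by move=> wr; exists (rscale v r) => //; apply/imsetP; exists r.
Qed.

Lemma mem_nclass (v : V) : v \notin radv -> v \in nclass (span1 v).
Proof.
move=> vu; rewrite nclass_span1E vu; apply/existsP; exists 1.
by rewrite rscale1 subrr radv0.
Qed.

Lemma nclass_subset (v1 v2 w : V) : w \in nclass (span1 v1) -> w \in nclass (span1 v2) ->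
  nclass (span1 v1) \subset nclass (span1 v2).
Proof.
rewrite !nclass_span1E => /andP[wu /existsP[r1 wr1]] /andP[_ /existsP[r2 wr2]].
have r1u : r1 \is a GRing.unit.
  apply: crad_unit; apply: contra wu => r1J.
  by rewrite -(subrK (rscale v1 r1) w) radvD ?rscale_crad.
have v12 : rscale v1 r1 - rscale v2 r2 \in radv.
  have -> : rscale v1 r1 - rscale v2 r2 = (w - rscale v2 r2) - (w - rscale v1 r1).
    by rewrite opprB [RHS]addrC addrA subrK.
  exact: radvB.
apply/subsetP => z; rewrite !nclass_span1E => /andP[zu /existsP[s zs]].
rewrite zu; apply/existsP; exists (r2 * (r1^-1 * s)).
have -> : z - rscale v2 (r2 * (r1^-1 * s)) =
          (z - rscale v1 s) + rscale (rscale v1 r1 - rscale v2 r2) (r1^-1 * s).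
  by rewrite rscaleBl !rscaleA (mulVKr r1u) addrA subrK.
by rewrite radvD ?radv_rscale.
Qed.

Lemma nclass_eq (v1 v2 w : V) : w \in nclass (span1 v1) -> w \in nclass (span1 v2) ->
  nclass (span1 v1) = nclass (span1 v2).
Proof.
by move=> w1 w2; apply/eqP; rewrite eqEsubset !(nclass_subset w1 w2, nclass_subset w2 w1).
Qed.

Definition nclasses : {set {set V}} := [set nclass P | P in [set P | is_point P]].

(* v a + h with a a unit and h in rad^3 with h_i = 0 gives distinct vectors
   of the class of vR, for a coordinate i at which v is a unit. *)
Lemma card_nclass (v : V) : v \notin radv ->
  ((#|R| - #|J|) * #|J| ^ 2 <= #|nclass (span1 v)|)%N.
Proof.
move=> vu; have /radvPn[i vi] := vu.
pose T := box (fun k => if k == i then [set 0 : R] else J).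
have T0 h : h \in T -> h 0 i = 0.
  by rewrite inE => /forallP/(_ i); rewrite eqxx inE => /eqP.
have TJ h : h \in T -> h \in radv.
  move=> hT; apply/radvP => k; move: hT; rewrite inE => /forallP/(_ k).
  by case: (k == i); rewrite // inE => /eqP ->; apply: crad0.
pose f (p : R * V) := rscale v p.1 + p.2.
have f_inj : {in setX (~: J) T &, injective f}.
  move=> [a h] [a' h']; rewrite !in_setX /= => /andP[_ hT] /andP[_ h'T] e.
  have aa' : a = a'.
    by apply: (mulrI vi); have /rowP/(_ i) := e; rewrite /f /= !mxE (T0 h) // (T0 h') // !addr0.
  by move: e; rewrite /f /= aa' => /addrI ->.
have -> : (#|R| - #|J| = #|~: J|)%N by rewrite -(cardsC J) addKn.
have -> : (#|J| ^ 2 = #|T|)%N by rewrite card_box_at cards1 mul1n.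
rewrite -cardsX -(card_in_imset f_inj).
apply/subset_leq_card/subsetP => z /imsetP[[a h]]; rewrite in_setX /=.
move=> /andP[aJ hT] ->; rewrite nclass_span1E; apply/andP; split.
  apply/radvPn; exists i; rewrite /f /= !mxE (T0 h) // addr0 unitrMr //.
  by apply: crad_unit; rewrite inE in aJ.
by apply/existsP; exists a; rewrite /f /= addrC addKr TJ.
Qed.

Lemma card_nclasses : (#|nclasses| <= #|J| ^ 2 + #|J| + 1)%N.
Proof.
have cardJ2 := card_crad_sq chainR; have J_gt1 := card_crad_gt1 chainR.
have : (#|nclasses| * ((#|R| - #|J|) * #|J| ^ 2) <= #|R| ^ 3 - #|J| ^ 3)%N.
  have -> : (#|R| ^ 3 - #|J| ^ 3 = #|~: radv|)%N.
    by rewrite -[#|~: radv|](addKn #|radv|) cardsC card_mx card_box prod_nat_const card_ord mul1n.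
  apply: card_disjoint_family.
  - move=> _ /imsetP[P _ ->]; apply/subsetP => z.
    by rewrite in_setC inE => /andP[].
  - move=> _ _ /imsetP[P PP ->] /imsetP[Q QQ ->] neq; rewrite !inE in PP QQ.
    have [[v _ Pv] [u _ Qu]] := (is_pointP chainR PP, is_pointP chainR QQ).
    rewrite Pv Qu in neq *; apply/pred0Pn => -[z /andP[zv zu]].
    by move/eqP: neq; apply; apply: nclass_eq zv zu.
  - move=> _ /imsetP[P PP ->]; rewrite inE in PP.
    by have [v vu ->] := is_pointP chainR PP; apply: card_nclass.
move: J_gt1; rewrite -cardJ2; case: #|J| => [|[|q]] // _.
have -> : ((q.+2 * q.+2) ^ 3 - q.+2 ^ 3 =
           (q.+2 ^ 2 + q.+2 + 1) * ((q.+2 * q.+2 - q.+2) * q.+2 ^ 2))%N.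
  rewrite -!mulnn; nia.
by rewrite leq_pmul2r //; nia.
Qed.

End NeighbourClasses.

Section LinesJoining.
Variable R : finUnitRingType.
Hypothesis chainR : chain_ring2 R.
Local Notation J := (crad R).
Local Notation V := 'rV[R]_3.
Local Notation radv := (radv R).

Lemma radv_rscale_gen (d : V) t : t \in J -> t != 0 -> d \in radv ->
  exists a : V, d = rscale a t.
Proof.
move=> tJ t_neq0 /radvP dJ.
have dt m : exists a, d 0 m == a * t.
  by have [a ->] := crad_lgen chainR tJ t_neq0 (dJ m); exists a.
by exists (\row_m xchoose (dt m)); apply/rowP => m; rewrite !mxE; apply/eqP; exact: xchooseP (dt m).
Qed.

Variables (v : V) (i : 'I_3).
Hypothesis vi : v 0 i \is a GRing.unit.

Lemma span2_slice_eq (w w' : V) (k : 'I_3) :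
  w' \in span2 v w -> w 0 i = 0 -> w' 0 i = 0 ->
  w 0 k \is a GRing.unit -> w' 0 k = w 0 k -> w' = w.
Proof.
move=> /span2P[r [s w'E]] wi w'i wk w'k.
have r0 : r = 0.
  apply: (mulrI vi); have /rowP/(_ i) := w'E.
  by rewrite !mxE wi w'i mul0r addr0 mulr0.
have s1 : s = 1.
  apply: (mulrI wk); have /rowP/(_ k) := w'E.
  by rewrite !mxE r0 mulr0 add0r w'k mulr1.
by rewrite w'E r0 s1 rscaler0 add0r rscale1.
Qed.

(* Write d = a t with 0 != t in J; as d != 0, some a_k is a unit.  Zeroing the
   i-th coordinate of a and adding s in J at the third coordinate l gives |J|
   free vectors w_s with w_s t = d, spanning with v distinct lines through
   u = v c + d. *)
Lemma card_lines_through_neighbour (u d : V) c :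
  d \in radv -> d != 0 -> d 0 i = 0 -> u = rscale v c + d ->
  (#|J| <= #|[set L in lines_through v | u \in L]|)%N.
Proof.
move=> dJ d_neq0 di ->.
have [t tJ t_neq0] := crad_neq0 chainR.
have [a dat] := radv_rscale_gen tJ t_neq0 dJ.
have [k dk] : exists k, d 0 k != 0.
  apply/existsP; apply: contraR d_neq0; rewrite negb_exists => /forallP dk.
  by apply/eqP/rowP => m; rewrite mxE; apply/eqP/negbNE.
have ak : a 0 k \is a GRing.unit.
  apply: crad_unit; apply: contra dk => akJ.
  by rewrite dat mxE (crad_mul0 chainR akJ tJ).
have ki : k != i by apply: contraNneq dk => ->; rewrite di.
have [l /andP[li lk]] := exists_third i k.
pose w s : V := \row_m if m == i then 0 else if m == l then a 0 m + s else a 0 m.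
have wi s : w s 0 i = 0 by rewrite mxE eqxx.
have wk s : w s 0 k = a 0 k by rewrite mxE (negbTE ki) eq_sym (negbTE lk).
have wu s : w s \notin radv by apply/radvPn; exists k; rewrite wk.
have wt s : s \in J -> rscale (w s) t = d.
  move=> sJ; apply/rowP => m; rewrite !mxE.
  case: eqP => [-> | _]; first by rewrite mul0r di.
  rewrite dat mxE; case: eqP => // _.
  by rewrite mulrDl (crad_mul0 chainR sJ tJ) addr0.
have span_inj : {in J &, injective (fun s => span2 v (w s))}.
  move=> s s' _ _ ss'.
  have w's : w s' \in span2 v (w s) by rewrite ss' mem_span2r.
  have wsk : w s 0 k \is a GRing.unit by rewrite wk.
  have := span2_slice_eq w's (wi s) (wi s') wsk (etrans (wk s') (esym (wk s))).
  by move/rowP/(_ l); rewrite !mxE (negbTE li) eqxx => /addrI.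
rewrite -(card_in_imset span_inj); apply/subset_leq_card/subsetP => _ /imsetP[s sJ ->].
rewrite !inE mem_span2l andbT (is_line_span2 (span2_indep vi (wi s) (wu s))) /=.
by apply/span2P; exists c, t; rewrite wt.
Qed.

(* As u - v r lies in rad^3 for some r, so does
   u - v (coef_along v i u) = (u - v r) - v (v_i^-1 (u - v r)_i). *)
Lemma neighbour_sub_coef_along (u : V) : u \notin radv ->
  nclass (span1 u) = nclass (span1 v) -> u - rscale v (coef_along v i u) \in radv.
Proof.
move=> uu cls_uv; have := mem_nclass uu; rewrite cls_uv nclass_span1E.
case/andP => _ /existsP[r]; set e := u - rscale v r => eJ.
have -> : coef_along v i u = (v 0 i)^-1 * e 0 i + r.
  by rewrite /e /coef_along !mxE mulrBr mulKr // subrK.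
rewrite rscaleDr opprD addrA addrAC -/e radvB // rscale_crad // cradMl //.
by move/radvP: eJ.
Qed.

Lemma card_lines_through_pair (u : V) : u \notin radv -> span1 u != span1 v ->
  (1 + (nclass (span1 u) == nclass (span1 v)) * (#|J| - 1)
     <= #|[set L in lines_through v | u \in L]|)%N.
Proof.
move=> uu neq_uv; set d := u - rscale v (coef_along v i u).
have uE : u = rscale v (coef_along v i u) + d by rewrite addrC subrK.
have vu : v \notin radv by apply/radvPn; exists i.
have [cls_uv | cls_uv] := eqVneq (nclass (span1 u)) (nclass (span1 v)).
  have d_neq0 : d != 0.
    apply/eqP => d0; move/eqP: neq_uv; apply; apply: (span1_eq uu vu).
    by rewrite {1}uE d0 addr0.
  have := card_lines_through_neighbour (neighbour_sub_coef_along uu cls_uv) d_neq0 (sub_coef_along u vi) uE.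
  by have := card_crad_gt1 chainR; lia.
have du : d \notin radv.
  apply: contra cls_uv => dJ; apply/eqP; apply: (nclass_eq chainR (mem_nclass uu)).
  by rewrite nclass_span1E uu; apply/existsP; exists (coef_along v i u).
rewrite mul0n addn0 card_gt0; apply/set0Pn; exists (span2 v d).
rewrite !inE mem_span2l (is_line_span2 (span2_indep vi (sub_coef_along u vi) du)) /=.
by apply/span2P; exists (coef_along v i u), 1; rewrite rscale1.
Qed.

End LinesJoining.

Lemma arc_arith (q n k M N : nat) : (1 < q -> 0 < n -> 0 < M -> k <= N * M ->
  N <= q ^ 2 + q + 1 ->
  (k - 1) + (q - 1) * (M - 1) <= (q ^ 2 + q) * (n - 1) ->
  k * (q + 2) <= ((q + 1) * n - q) * (q ^ 2 + q + 1))%N.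
Proof.
case: k => [|k] //; case: q => [|[|q]] // _; case: n => [|n] // _; case: M => [|m] // _.
rewrite !subn1 /= => kNM Nq key.
have -> : ((q.+2 + 1) * n.+1 - q.+2 = q.+3 * n + 1)%N by rewrite mulnS; lia.
have kN : (k.+1 <= (q.+2 ^ 2 + q.+2 + 1) * m.+1)%N.
  by apply: (leq_trans kNM); rewrite leq_mul2r Nq orbT.
nia.
Qed.

Section Arcs.
Variable R : finUnitRingType.
Hypothesis chainR : chain_ring2 R.
Local Notation J := (crad R).
Local Notation V := 'rV[R]_3.
Local Notation radv := (radv R).

Lemma card_le_nclasses (S : {set {set V}}) (M : nat) :
  {in S, forall x, is_point x} ->
  {in S, forall y, #|[set z in S | nclass z == nclass y]| <= M}%N ->
  (#|S| <= #|nclasses R| * M)%N.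
Proof.
move=> Spt SM; pose cls := @nclass R.
have -> : #|S| = (\sum_(C in cls @: S) #|[set z in S | cls z == C]|)%N.
  rewrite -sum1_card (partition_big cls (mem (cls @: S))) /=; last first.
    by move=> y yS; apply: imset_f.
  by apply: eq_bigr => C _; rewrite -sum1_card; apply: eq_bigl => z; rewrite inE.
apply: (@leq_trans (\sum_(C in cls @: S) M)).
  by apply: leq_sum => _ /imsetP[y yS ->]; apply: SM.
rewrite sum_nat_const leq_mul2r subset_leq_card ?orbT //.
by apply/subsetP => _ /imsetP[y yS ->]; rewrite imset_f // inE Spt.
Qed.

Lemma proj_arc_points (S : {set {set V}}) n : proj_arc S n -> {in S, forall x, is_point x}.
Proof. by case/andP => /forall_inP. Qed.

Lemma proj_arc_lines (S : {set {set V}}) n L :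
  proj_arc S n -> is_line L -> (#|[set x in S | x \subset L]| <= n)%N.
Proof. by case/andP => _ /forallP/(_ L)/implyP. Qed.

Section ArcIncidences.
Variables (S : {set {set V}}) (n : nat) (v : V) (i : 'I_3).
Hypotheses (arcS : proj_arc S n) (vi : v 0 i \is a GRing.unit) (vS : span1 v \in S).

Lemma arc_incidences_lower :
  ((#|S| - 1) + (#|J| - 1) * (#|[set z in S | nclass z == nclass (span1 v)]| - 1)
     <= \sum_(y in S :\ span1 v) #|[set L in lines_through v | y \subset L]|)%N.
Proof.
set x := span1 v.
apply: (@leq_trans (\sum_(y in S :\ x) (1 + (nclass y == nclass x) * (#|J| - 1)))%N).
  rewrite big_split /= sum1_card -big_distrl /= -card_sep_sum mulnC.
  rewrite (cardsD1 x S) vS add1n subn1 /=.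
  rewrite (cardsD1 x [set z in S | nclass z == nclass x]) inE vS eqxx add1n subn1 /=.
  by rewrite leq_add2l leq_mul2r; apply/orP; right; apply/eq_leq/eq_card => z; rewrite !inE andbA.
apply: leq_sum => y /setD1P[yx yS].
have [u uu yu] := is_pointP chainR (proj_arc_points arcS yS).
have -> : #|[set L in lines_through v | y \subset L]| = #|[set L in lines_through v | u \in L]|.
  apply: eq_card => L; rewrite !inE; case lineL: (is_line L) => //=.
  by have [subL _] := is_lineP lineL; rewrite yu span1_subset.
by rewrite yu; apply: (card_lines_through_pair chainR vi uu); rewrite -yu.
Qed.

Lemma arc_incidences_upper :
  (\sum_(y in S :\ span1 v) #|[set L in lines_through v | y \subset L]|
     <= (#|J| ^ 2 + #|J|) * (n - 1))%N.
Proof.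
under eq_bigr => y _ do rewrite card_sep_sum.
rewrite exchange_big /=.
apply: (@leq_trans (\sum_(L in lines_through v) (n - 1))%N); last first.
  by rewrite sum_nat_const leq_mul2r -mulnn (card_crad_sq chainR) (card_lines_through chainR vi) orbT.
apply: leq_sum => L; rewrite inE => /andP[lineL vL]; rewrite -card_sep_sum.
have vsubL : span1 v \subset L by have [subL _] := is_lineP lineL; rewrite span1_subset.
have -> : [set y in S :\ span1 v | y \subset L] = [set y in S | y \subset L] :\ span1 v.
  by apply/setP => z; rewrite !inE andbA.
have := proj_arc_lines arcS lineL.
rewrite (cardsD1 (span1 v) [set y in S | y \subset L]) !inE vS vsubL add1n.
by move=> lt_n; rewrite subn1 -ltnS prednK // (leq_ltn_trans _ lt_n).
Qed.

End ArcIncidences.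

Lemma proj_arc_card_bound (S : {set {set V}}) n : proj_arc S n -> (0 < n)%N ->
  (#|S| * (#|J| + 2) <= ((#|J| + 1) * n - #|J|) * (#|J| ^ 2 + #|J| + 1))%N.
Proof.
move=> arcS n_gt0; have Spt := proj_arc_points arcS.
have [-> | [x0 x0S]] := set_0Vmem S; first by rewrite cards0.
pose cnt y := #|[set z in S | nclass z == nclass y]|.
have [x xS xmax] := @arg_maxnP _ x0 (mem S) cnt x0S; have {}xS : x \in S := xS.
have [v vu xv] := is_pointP chainR (Spt x xS).
have /radvPn[i vi] := vu.
have vS : span1 v \in S by rewrite -xv.
apply: (arc_arith (card_crad_gt1 chainR) n_gt0 _ (card_le_nclasses Spt xmax) (card_nclasses chainR)).
  by rewrite card_gt0; apply/set0Pn; exists x; rewrite inE xS eqxx.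
rewrite /cnt xv; apply: (leq_trans (arc_incidences_lower arcS vi vS)).
exact: (arc_incidences_upper arcS vi vS).
Qed.

End Arcs.

Theorem corollary4p9 (R : finUnitRingType) (q n : nat) :
  chain_ring2 R ->
  (q * #|crad R| = #|R|)%N ->
  (1 <= n <= q ^ 2 + q)%N ->
  (m_n R n <= (((q + 1) * n - q) * (q ^ 2 + q + 1)) %/ (q + 2))%N.
Proof.
move=> chainR qJ /andP[n_gt0 _].
have -> : q = #|crad R|.
  apply/eqP; rewrite -(eqn_pmul2r (ltnW (card_crad_gt1 chainR))) qJ.
  by rewrite (card_crad_sq chainR).
apply/bigmax_leqP => S arcS; rewrite leq_divRL ?addn_gt0 ?orbT //.
exact: proj_arc_card_bound.
Qed.
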